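(* Let $n,n'\in\mathbb{N}$ and let $\phi:\mathbb{N}^n\to\mathbb{N}^{n'}$ be a map that preserves joins and meets, i.e. $\phi(a\vee b)=\phi(a)\vee\phi(b)$ and $\phi(a\wedge b)=\phi(a)\wedge\phi(b)$ for all $a,b\in\mathbb{N}^n$. Then $\phi$ changes the Stanley depth by $n-n'$ with respect to any $g\in\mathbb{N}^n$ and $g':=\phi(g)$.
   Context: $\mathbb{N}^n$ carries the componentwise partial order, with $\vee$ and $\wedge$ the componentwise maximum and minimum; $[a,b]=\{c: a\le c\le b\}$; a map is monotonic if it preserves this order. A monotonic map $\phi:\mathbb{N}^n\to\mathbb{N}^{n'}$ changes the Stanley depth by $\ell\in\mathbb{Z}$ with respect to $g\in\mathbb{N}^n$ and $g'\in\mathbb{N}^{n'}$ if (1) $\phi(g)\le g'$, and (2) for every interval $[a',b']\subset[0,g']$, the set $\phi^{-1}([a',b'])\cap[0,g]$ is a finite disjoint union $\bigcup_i[a^i,b^i]$ of intervals with $\#\{j\in[n]: b^i_j=g_j\}\ge\#\{j\in[n']: b'_j=g'_j\}+\ell$ for all $i$. *)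

From mathcomp Require Import all_boot all_order all_algebra.
Set Implicit Arguments. Unset Strict Implicit. Unset Printing Implicit Defensive.

Definition vec (n : nat) := {ffun 'I_n -> nat}.

Definition vle n (a b : vec n) : bool := [forall i, a i <= b i].

Definition vjoin n (a b : vec n) : vec n := [ffun i => maxn (a i) (b i)].
Definition vmeet n (a b : vec n) : vec n := [ffun i => minn (a i) (b i)].

Definition vzero n : vec n := [ffun _ => 0].

Definition in_interval n (a b c : vec n) : Prop := vle a c /\ vle c b.

Definition monotonic n n' (phi : vec n -> vec n') : Prop :=
  forall a b, vle a b -> vle (phi a) (phi b).

Definition nmax n (b g : vec n) : nat := #|[set j | b j == g j]|.

Definition sdepth_decomp n (S : vec n -> Prop) (g : vec n) (k : int)
    (D : seq (vec n * vec n)) : Prop :=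
  (forall c, S c <-> exists2 p, p \in D & in_interval p.1 p.2 c) /\
  (forall i j c, (i < size D)%N -> (j < size D)%N -> i <> j ->
     in_interval (nth (vzero n, vzero n) D i).1 (nth (vzero n, vzero n) D i).2 c ->
     ~ in_interval (nth (vzero n, vzero n) D j).1 (nth (vzero n, vzero n) D j).2 c) /\
  (forall p, p \in D -> (k <= (nmax p.2 g)%:Z)%R).

Definition changes_sdepth n n' (phi : vec n -> vec n') (l : int)
    (g : vec n) (g' : vec n') : Prop :=
  monotonic phi /\
  vle (phi g) g' /\
  (forall a' b' : vec n',
     (forall c, in_interval a' b' c -> in_interval (vzero n') g' c) ->
     exists D : seq (vec n * vec n),
       sdepth_decomp (fun c => in_interval a' b' (phi c) /\ in_interval (vzero n) g c)
                     g ((nmax b' g')%:Z + l)%R D).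

From mathcomp Require Import all_boot all_order all_algebra.
From mathcomp Require Import zify.
Set Implicit Arguments. Unset Strict Implicit. Unset Printing Implicit Defensive.

(** The set of [c] in the box [[0, g]] with [phi c] in [[a', b']] is closed
    under joins and meets (phi preserves both) and convex (phi is monotonic);
    being finite, it is a single interval [[a, b]].  For every coordinate [i]
    with [b i < g i], raising [b] by one at [i] leaves the set, so [phi] of it
    exceeds [b'] at some coordinate [j], necessarily one with [b' j < g' j].
    Two distinct such [i] cannot share a [j], because the meet of the two
    raised vectors is [b] and [phi b <= b'].  Hence [b] has at most as many
    non-maximal coordinates as [b'], which is the required count. *)

Section VecLattice.
Variable n : nat.
Implicit Types a b c : vec n.

Lemma vleP a b : reflect (forall i, a i <= b i) (vle a b).
Proof. exact: forallP. Qed.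

Lemma vle_refl a : vle a a.
Proof. by apply/vleP. Qed.

Lemma vle_trans b a c : vle a b -> vle b c -> vle a c.
Proof. by move=> /vleP ab /vleP bc; apply/vleP=> i; exact: leq_trans (ab i) (bc i). Qed.

Lemma vle0 a : vle (vzero n) a.
Proof. by apply/vleP=> i; rewrite ffunE. Qed.

Lemma vle_joinl a b : vle a (vjoin a b).
Proof. by apply/vleP=> i; rewrite ffunE leq_maxl. Qed.

Lemma vle_joinr a b : vle b (vjoin a b).
Proof. by apply/vleP=> i; rewrite ffunE leq_maxr. Qed.

Lemma vle_meetl a b : vle (vmeet a b) a.
Proof. by apply/vleP=> i; rewrite ffunE geq_minl. Qed.

Lemma vle_meetr a b : vle (vmeet a b) b.
Proof. by apply/vleP=> i; rewrite ffunE geq_minr. Qed.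

Lemma vjoin_lub a b c : vle a c -> vle b c -> vle (vjoin a b) c.
Proof. by move=> /vleP ac /vleP bc; apply/vleP=> i; rewrite ffunE geq_max ac bc. Qed.

Lemma vmeet_glb a b c : vle c a -> vle c b -> vle c (vmeet a b).
Proof. by move=> /vleP ca /vleP cb; apply/vleP=> i; rewrite ffunE leq_min ca cb. Qed.

Lemma vjoin_idPr a b : vle a b -> vjoin a b = b.
Proof. by move=> /vleP ab; apply/ffunP=> i; rewrite ffunE (maxn_idPr (ab i)). Qed.

End VecLattice.

Lemma vjoin_morph_monotonic n n' (phi : vec n -> vec n') :
  (forall a b, phi (vjoin a b) = vjoin (phi a) (phi b)) -> monotonic phi.
Proof. by move=> hjoin a b /vjoin_idPr <-; rewrite hjoin vle_joinl. Qed.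

Definition box n (g : vec n) : seq (vec n) :=
  [seq [ffun i => nat_of_ord (h i)] | h : {ffun 'I_n -> 'I_(\max_(i < n) g i).+1}].

Lemma mem_box n (g c : vec n) : vle c g -> c \in box g.
Proof.
move=> /vleP cg; apply/imageP; exists [ffun i => inord (c i)] => //.
apply/ffunP=> i; rewrite !ffunE inordK // ltnS (leq_trans (cg i)) //.
by rewrite (bigD1 i) //= leq_maxl.
Qed.

Lemma op_closed_has_bound (T : eqType) (R : rel T) (op : T -> T -> T)
    (P : pred T) (s : seq T) :
  reflexive R -> transitive R ->
  (forall x y, R x (op x y)) -> (forall x y, R y (op x y)) ->
  (forall x y, P x -> P y -> P (op x y)) ->
  has P s -> exists2 t, P t & {in s, forall c, P c -> R c t}.
Proof.
move=> Rrefl Rtrans Rl Rr Pop; elim: s => //= x s IH.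
case: (boolP (has P s)) => [/IH [t Pt tmax] _ | /hasPn noPs /orP [Px // | //]].
- case: (boolP (P x)) => Px.
  + exists (op x t); first exact: Pop.
    move=> c; rewrite inE => /predU1P [-> _ | cs Pc]; first exact: Rl.
    exact: Rtrans (tmax c cs Pc) (Rr _ _).
  + exists t => // c; rewrite inE => /predU1P [-> | cs]; last exact: tmax.
    by rewrite (negbTE Px).
- exists x => // c; rewrite inE => /predU1P [-> _ | /noPs /negbTE -> //].
  exact: Rrefl.
Qed.

Lemma convex_sublattice_interval n (g : vec n) (S : pred (vec n)) :
  (forall c, S c -> vle c g) ->
  (forall x y, S x -> S y -> S (vjoin x y)) ->
  (forall x y, S x -> S y -> S (vmeet x y)) ->
  (forall x y c, S x -> S y -> vle x c -> vle c y -> S c) ->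
  (forall c, ~~ S c) \/ exists a b, vle a b /\ forall c, S c <-> in_interval a b c.
Proof.
move=> Sg Sjoin Smeet Sconv.
have Sbox c : S c -> c \in box g by move/Sg/mem_box.
case: (boolP (has S (box g))) => [hasS | /hasPn noS]; last first.
  by left=> c; apply/negP=> Sc; move/negP: (noS c (Sbox c Sc)).
have [b Sb bmax] := op_closed_has_bound (@vle_refl n) (@vle_trans n)
  (@vle_joinl n) (@vle_joinr n) Sjoin hasS.
have [a Sa amin] := op_closed_has_bound (R := fun x y => vle y x) (@vle_refl n)
  (fun y x z xy yz => vle_trans yz xy) (@vle_meetl n) (@vle_meetr n) Smeet hasS.
right; exists a, b; split; first exact: amin (Sbox b Sb) Sb.
move=> c; split=> [Sc | [ac cb]]; last exact: Sconv Sa Sb ac cb.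
by split; [exact: amin (Sbox c Sc) Sc | exact: bmax (Sbox c Sc) Sc].
Qed.

Section Preimage.
Variables (n n' : nat) (phi : vec n -> vec n').
Hypothesis hjoin : forall a b, phi (vjoin a b) = vjoin (phi a) (phi b).
Hypothesis hmeet : forall a b, phi (vmeet a b) = vmeet (phi a) (phi b).
Variables (g : vec n) (a' b' : vec n').

Let mono : monotonic phi := vjoin_morph_monotonic hjoin.

Definition preim (c : vec n) : bool := [&& vle a' (phi c), vle (phi c) b' & vle c g].

Lemma preim_interval :
  (forall c, ~~ preim c) \/
  exists a b, vle a b /\ forall c, preim c <-> in_interval a b c.
Proof.
apply: (convex_sublattice_interval (g := g)).
- by move=> c /and3P [].
- move=> x y /and3P [ax xb xg] /and3P [_ yb yg]; apply/and3P; split.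
  + by rewrite hjoin (vle_trans ax (vle_joinl _ _)).
  + by rewrite hjoin vjoin_lub.
  + exact: vjoin_lub.
- move=> x y /and3P [ax xb xg] /and3P [ay _ _]; apply/and3P; split.
  + by rewrite hmeet vmeet_glb.
  + by rewrite hmeet (vle_trans (vle_meetl _ _) xb).
  + exact: vle_trans (vle_meetl _ _) xg.
- move=> x y c /and3P [ax _ _] /and3P [_ yb yg] xc cy; apply/and3P; split.
  + exact: vle_trans ax (mono xc).
  + exact: vle_trans (mono cy) yb.
  + exact: vle_trans cy yg.
Qed.

Lemma preim_maximal a b :
  (forall c, preim c <-> in_interval a b c) -> preim b ->
  forall c, vle b c -> vle c g -> vle (phi c) b' -> vle c b.
Proof.
move=> Sab /and3P [ab _ _] c bc cg cb'.
have : preim c by rewrite /preim (vle_trans ab (mono bc)) cb' cg.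
by case/Sab.
Qed.

End Preimage.

Definition slack n (b g : vec n) : {set 'I_n} := [set i | b i != g i].

Lemma nmax_add_slack n (b g : vec n) : nmax b g + #|slack b g| = n.
Proof.
rewrite /nmax -[RHS](card_ord n) -(cardsC [set j | b j == g j]); congr (_ + _).
by apply: eq_card => i; rewrite !inE.
Qed.

Definition vbump n (b : vec n) (i : 'I_n) : vec n := [ffun k => b k + (k == i)].

Section Bump.
Variables (n : nat) (b : vec n).

Lemma vle_bump i : vle b (vbump b i).
Proof. by apply/vleP=> k; rewrite ffunE leq_addr. Qed.

Lemma vbump_notle i : ~~ vle (vbump b i) b.
Proof. by apply/vleP=> /(_ i); rewrite ffunE eqxx addn1 ltnn. Qed.

Lemma vbump_le g i : vle b g -> i \in slack b g -> vle (vbump b i) g.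
Proof.
move=> /vleP bg; rewrite inE => bgi; apply/vleP=> k; rewrite ffunE.
by case: eqP => [-> | _]; rewrite ?addn1 ?addn0 // ltn_neqAle bgi bg.
Qed.

Lemma vmeet_bump i k : i != k -> vmeet (vbump b i) (vbump b k) = b.
Proof.
move=> ik; apply/ffunP=> l; rewrite !ffunE.
case: (eqVneq l i) => [-> | _]; last by rewrite addn0 (minn_idPl (leq_addr _ _)).
by rewrite (negbTE ik) addn0 minnC (minn_idPl (leq_addr _ _)).
Qed.

End Bump.

Lemma card_slack_le n n' (phi : vec n -> vec n')
    (hmeet : forall a b, phi (vmeet a b) = vmeet (phi a) (phi b))
    (mono : monotonic phi) (g b : vec n) (b' : vec n') :
  vle b g -> vle (phi b) b' ->
  (forall c, vle b c -> vle c g -> vle (phi c) b' -> vle c b) ->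
  #|slack b g| <= #|slack b' (phi g)|.
Proof.
move=> bg bb' bmax.
pose f i := [pick j | b' j < phi (vbump b i) j].
have fP i : i \in slack b g -> exists2 j, f i = Some j & b' j < phi (vbump b i) j.
  move=> iA; have : ~~ vle (phi (vbump b i)) b'.
    apply: contraNN (vbump_notle b i) => le_b'.
    by apply: bmax; [exact: vle_bump | exact: vbump_le | done].
  rewrite /f; case: pickP => [j hj _ | none]; first by exists j.
  by case/negP; apply/vleP=> j; rewrite leqNgt none.
have finj : {in slack b g &, injective f}.
  move=> i k /fP [j -> hj] /fP [j' -> hj'] [ejj]; subst j'.
  apply: contraTeq isT => ik; move/vleP: bb' => /(_ j).
  by rewrite -(vmeet_bump b ik) hmeet ffunE geq_min leqNgt hj /= leqNgt hj'.
rewrite -(card_in_imset finj) -(card_imset (slack b' (phi g)) (@Some_inj _)).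
apply: subset_leq_card; apply/subsetP=> _ /imsetP [i iA ->].
have [j -> hj] := fP i iA; rewrite imset_f // inE neq_ltn.
by move/vleP: (mono _ _ (vbump_le bg iA)) => /(_ j) /(leq_trans hj) ->.
Qed.

Theorem theorem3p7 (n n' : nat) (phi : vec n -> vec n')
  (hjoin : forall a b : vec n, phi (vjoin a b) = vjoin (phi a) (phi b))
  (hmeet : forall a b : vec n, phi (vmeet a b) = vmeet (phi a) (phi b))
  (g : vec n) :
  changes_sdepth phi (n%:Z - n'%:Z)%R g (phi g).
Proof.
have mono := vjoin_morph_monotonic hjoin.
split=> //; split=> [|a' b' _]; first exact: vle_refl.
have preimE c :
    in_interval a' b' (phi c) /\ in_interval (vzero n) g c <-> preim phi g a' b' c.
  rewrite /preim /in_interval vle0.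
  by split=> [[[-> ->] [_ ->]] | /and3P [-> -> ->]].
case: (preim_interval hjoin hmeet g a' b') => [empty | [a [b [ab Sab]]]].
  exists [::]; split; [|split] => // c; rewrite preimE.
  by split=> [Sc | [p]]; [move/negP: (empty c) | rewrite in_nil].
exists [:: (a, b)]; split; [|split] => [c | [|i] [|j] c // | p] /=.
  rewrite preimE Sab; split=> [abc | [p]]; first by exists (a, b); rewrite ?inE.
  by rewrite inE => /eqP ->.
rewrite inE => /eqP -> /=.
have Sb : preim phi g a' b' b by apply/Sab; split; [exact: ab | exact: vle_refl].
have /and3P [_ bb' bg] := Sb.
have := card_slack_le hmeet mono bg bb' (preim_maximal hjoin Sab Sb).
have := nmax_add_slack b g; have := nmax_add_slack b' (phi g); lia.
Qed.
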